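(* For every $g\ge 2$, the Pearson degree correlation coefficient of $\mathcal{F}_g$ is $$r(\mathcal{F}_g)=\frac{(g-1)^2}{-3\cdot 2^g+g^2+2g+3}.$$
   Context: $\mathcal{F}_1$ is the 4-cycle; for $g>1$, $\mathcal{F}_g$ is obtained from $\mathcal{F}_{g-1}$ by replacing each edge $\{u,v\}$ with two new vertices each adjacent to both $u$ and $v$ (the edge $\{u,v\}$ itself is deleted). For a graph with $E$ edges whose $i$-th edge has endpoint degrees $j_i,k_i$, the Pearson correlation coefficient is $$r=\frac{E\sum_{i=1}^E j_ik_i-\left[\sum_{i=1}^E\frac12(j_i+k_i)\right]^2}{E\sum_{i=1}^E\frac12(j_i^2+k_i^2)-\left[\sum_{i=1}^E\frac12(j_i+k_i)\right]^2}.$$ *)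

From mathcomp Require Import all_boot all_order all_algebra.
Set Implicit Arguments. Unset Strict Implicit. Unset Printing Implicit Defensive.
Import Order.TTheory GRing.Theory Num.Theory.

(* A (simple, loopless) graph on vertex set {0,..,nv-1}, given by its edge
   list: each edge {u,v} appears exactly once as a pair (u,v). *)
Record graph := Graph { nv : nat; edges : seq (nat * nat) }.

Definition deg (G : graph) (x : nat) : nat :=
  count (fun e : nat * nat => (e.1 == x) || (e.2 == x)) (edges G).

Definition C4 : graph := Graph 4 [:: (0, 1); (1, 2); (2, 3); (3, 0)]%N.

(* Replace each edge {u,v} of the list by two fresh vertices w, w', each
   adjacent to both u and v; fresh vertices are numbered from [k] on. *)
Fixpoint subdiv_edges (k : nat) (E : seq (nat * nat)) : seq (nat * nat) :=
  match E with
  | [::] => [::]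
  | (u, v) :: E' =>
      [:: (u, k); (k, v); (u, k.+1); (k.+1, v)] ++ subdiv_edges k.+2 E'
  end.

Definition step (G : graph) : graph :=
  Graph (nv G + 2 * size (edges G)) (subdiv_edges (nv G) (edges G)).

Definition F (g : nat) : graph := iter g.-1 step C4.

Local Open Scope ring_scope.

Definition pearson (G : graph) : rat :=
  let E := (size (edges G))%:R : rat in
  let j (e : nat * nat) := (deg G e.1)%:R : rat in
  let k (e : nat * nat) := (deg G e.2)%:R : rat in
  let S1 := \sum_(e <- edges G) j e * k e in
  let S2 := \sum_(e <- edges G) (j e + k e) / 2 in
  let S3 := \sum_(e <- edges G) (j e ^+ 2 + k e ^+ 2) / 2 in
  (E * S1 - S2 ^+ 2) / (E * S3 - S2 ^+ 2).

From mathcomp Require Import all_boot all_order all_algebra.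
Import Order.TTheory GRing.Theory Num.Theory.
From mathcomp Require Import zify ring.

(* In [step G] every edge joins an old vertex, whose degree has doubled
   (this needs G loopless), to a new vertex of degree 2.  Hence the edge count
   E and the edge sums of jk, j + k and j^2 + k^2 of [step G] are linear in
   those of G: 4E, 8 sum(j + k), 4 sum(j + k) + 8E and 8 sum(j^2 + k^2) + 16E.
   Starting from the 4-cycle, where all degrees are 2, this gives with t = 2^g
   E = t^2, sum(j + k) = (2g + 2) t^2, sum(j^2 + k^2) = 6t^3 - 4t^2 and, for
   g >= 2, sum(jk) = 4g t^2; the numerator and denominator of r are then
   -t^4 (g - 1)^2 and -t^4 (g^2 + 2g + 3 - 3t). *)

Definition wf_graph (G : graph) : bool :=
  all (fun e : nat * nat => [&& e.1 < nv G, e.2 < nv G & e.1 != e.2]) (edges G).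

Definition incident (x : nat) (e : nat * nat) : bool := (e.1 == x) || (e.2 == x).

Lemma size_subdiv_edges k E : size (subdiv_edges k E) = (4 * size E)%N.
Proof. by elim: E k => [|[u v] E IH] k //=; rewrite IH; lia. Qed.

Lemma wf_subdiv_edges k E :
  all (fun e : nat * nat => (e.1 < k) && (e.2 < k)) E ->
  all (fun e : nat * nat => [&& e.1 < k + 2 * size E, e.2 < k + 2 * size E & e.1 != e.2])
    (subdiv_edges k E).
Proof.
elim: E k => [|[u v] E IH] k //= /andP[/andP[uk vk] hE].
have hE' : all (fun e : nat * nat => (e.1 < k.+2) && (e.2 < k.+2)) E.
  by apply: sub_all hE => e /andP[]; lia.
have -> : (k + 2 * (size E).+1 = k.+2 + 2 * size E)%N by lia.
by rewrite IH // andbT; apply/and4P; split; apply/and3P; split; lia.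
Qed.

Lemma count_subdiv_edges_old k E x :
  (x < k)%N -> all (fun e : nat * nat => e.1 != e.2) E ->
  count (incident x) (subdiv_edges k E) = (2 * count (incident x) E)%N.
Proof.
elim: E k => [|[u v] E IH] k //= xk /andP[uv hE].
rewrite IH ?(ltn_trans xk) // /incident /=.
have /negbTE -> : k != x by lia.
have /negbTE -> : k.+1 != x by lia.
by case: (eqVneq u x) => [hu|_]; case: (eqVneq v x) => [hv|_] /=; lia.
Qed.

Lemma count_subdiv_edges_new k E x :
  all (fun e : nat * nat => (e.1 != x) && (e.2 != x)) E ->
  count (incident x) (subdiv_edges k E) = (2 * ((k <= x) && (x < k + 2 * size E)))%N.
Proof.
elim: E k => [|[u v] E IH] k /=; first by rewrite addn0; case: ltnP.
move=> /andP[/andP[/negbTE ux /negbTE vx] hE].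
rewrite IH // /incident /= ux vx /=.
by case: (ltngtP x k) => h; case: (eqVneq k.+1 x) => h2 /=; lia.
Qed.

Lemma wf_step G : wf_graph G -> wf_graph (step G).
Proof.
move=> hG; apply: wf_subdiv_edges.
by apply: sub_all hG => e /and3P[-> ->].
Qed.

Lemma wf_F g : wf_graph (F g).
Proof. by rewrite /F; elim: g.-1 => [|n IH] //=; apply: wf_step. Qed.

Lemma deg_step_old G x :
  wf_graph G -> (x < nv G)%N -> deg (step G) x = (2 * deg G x)%N.
Proof.
move=> hG xG; apply: count_subdiv_edges_old xG _.
by apply: sub_all hG => e /and3P[].
Qed.

Lemma deg_step_new G x : wf_graph G -> (nv G <= x < nv G + 2 * size (edges G))%N ->
  deg (step G) x = 2%N.
Proof.
move=> hG hx; rewrite /deg /= count_subdiv_edges_new ?hx //.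
by apply: sub_all hG => e /and3P[? ? _]; apply/andP; split; apply/eqP; lia.
Qed.

Local Open Scope ring_scope.

Lemma big_subdiv_edges (R : nmodType) (h : nat -> nat -> R) (D : nat -> nat) k E :
  (forall x, (k <= x < k + 2 * size E)%N -> D x = 2%N) ->
  \sum_(e <- subdiv_edges k E) h (D e.1) (D e.2) =
  \sum_(e <- E) (h (D e.1) 2%N + h 2%N (D e.2)) *+ 2.
Proof.
elim: E k => [|[u v] E IH] k hD; first by rewrite !big_nil.
rewrite /= !big_cons (IH k.+2) => [|x hx]; last by apply: hD => /=; lia.
by rewrite (hD k) ?(hD k.+1) /= ?mulr2n ?addrA //; lia.
Qed.

Definition edge_sum (G : graph) (h : nat -> nat -> rat) : rat :=
  \sum_(e <- edges G) h (deg G e.1) (deg G e.2).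

Lemma edge_sum_step G h : wf_graph G ->
  edge_sum (step G) h =
  \sum_(e <- edges G) (h (2 * deg G e.1)%N 2%N + h 2%N (2 * deg G e.2)%N) *+ 2.
Proof.
move=> hG; rewrite /edge_sum big_subdiv_edges => [|x]; last exact: deg_step_new.
apply: eq_big_seq => e /(allP hG)/and3P[e1G e2G _].
by rewrite !deg_step_old.
Qed.

Lemma big_affine (R : pzSemiRingType) (I : Type) (r : seq I) (f g : I -> R) a b :
  (forall i, f i = a * g i + b) ->
  \sum_(i <- r) f i = a * \sum_(i <- r) g i + b *+ size r.
Proof.
move=> fE; elim: r => [|i r IH]; first by rewrite !big_nil mulr0 addr0.
by rewrite !big_cons IH fE mulrDr mulrS addrACA !addrA.
Qed.

Definition nedges (G : graph) : rat := (size (edges G))%:R.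
Definition deg_prod_sum (G : graph) : rat := edge_sum G (fun a b => a%:R * b%:R).
Definition deg_sum (G : graph) : rat := edge_sum G (fun a b => a%:R + b%:R).
Definition deg_sqr_sum (G : graph) : rat :=
  edge_sum G (fun a b => a%:R ^+ 2 + b%:R ^+ 2).

Lemma pearsonE G : pearson G =
  (nedges G * deg_prod_sum G - (deg_sum G / 2) ^+ 2) /
  (nedges G * (deg_sqr_sum G / 2) - (deg_sum G / 2) ^+ 2).
Proof. by rewrite /pearson /deg_sum /deg_sqr_sum /edge_sum !mulr_suml. Qed.

Section Step.
Variable G : graph.
Hypothesis wfG : wf_graph G.

Lemma nedges_step : nedges (step G) = 4 * nedges G.
Proof. by rewrite /nedges size_subdiv_edges natrM. Qed.

Lemma deg_prod_sum_step : deg_prod_sum (step G) = 8 * deg_sum G.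
Proof.
rewrite /deg_prod_sum edge_sum_step // mulr_sumr.
by apply: eq_bigr => e _; rewrite !natrM; ring.
Qed.

Lemma deg_sum_step : deg_sum (step G) = 4 * deg_sum G + 8 * nedges G.
Proof.
rewrite {1}/deg_sum edge_sum_step //.
rewrite (@big_affine _ _ _ _ (fun e => (deg G e.1)%:R + (deg G e.2)%:R) 4 8) ?mulr_natr //.
by move=> e; rewrite !natrM; ring.
Qed.

Lemma deg_sqr_sum_step : deg_sqr_sum (step G) = 8 * deg_sqr_sum G + 16 * nedges G.
Proof.
rewrite {1}/deg_sqr_sum edge_sum_step //.
rewrite (@big_affine _ _ _ _ (fun e => (deg G e.1)%:R ^+ 2 + (deg G e.2)%:R ^+ 2) 8 16)
  ?mulr_natr //.
by move=> e; rewrite !natrM; ring.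
Qed.

End Step.

Lemma F_succ n : F n.+2 = step (F n.+1).
Proof. by []. Qed.

Lemma nedges_F g : (0 < g)%N -> nedges (F g) = (2 ^+ g) ^+ 2.
Proof.
case: g => // n _; elim: n => [|n IH]; first by rewrite /nedges /=; ring.
by rewrite F_succ nedges_step ?wf_F // IH !exprS; ring.
Qed.

Lemma deg_sum_F g : (0 < g)%N -> deg_sum (F g) = (2 ^+ g) ^+ 2 * (2 * g%:R + 2).
Proof.
case: g => // n _; elim: n => [|n IH].
  by rewrite /deg_sum /edge_sum /= !big_cons big_nil.
rewrite F_succ deg_sum_step ?wf_F // IH nedges_F // !exprS -natr1; ring.
Qed.

Lemma deg_sqr_sum_F g : (0 < g)%N ->
  deg_sqr_sum (F g) = 6 * (2 ^+ g) ^+ 3 - 4 * (2 ^+ g) ^+ 2.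
Proof.
case: g => // n _; elim: n => [|n IH].
  by rewrite /deg_sqr_sum /edge_sum /= !big_cons big_nil.
rewrite F_succ deg_sqr_sum_step ?wf_F // IH nedges_F // !exprS; ring.
Qed.

Lemma deg_prod_sum_F g : (1 < g)%N -> deg_prod_sum (F g) = 4 * g%:R * (2 ^+ g) ^+ 2.
Proof.
case: g => [|[|n]] // _.
rewrite F_succ deg_prod_sum_step ?wf_F // deg_sum_F // !exprS -natr1; ring.
Qed.

Theorem proposition5 (g : nat) : (2 <= g)%N ->
  pearson (F g) =
    ((g%:R - 1) ^+ 2) / (- 3 * 2 ^+ g + g%:R ^+ 2 + 2 * g%:R + 3) :> rat.
Proof.
move=> g2; have g1 : (0 < g)%N by apply: ltnW.
rewrite pearsonE nedges_F // deg_prod_sum_F // deg_sum_F // deg_sqr_sum_F //.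
set t : rat := 2 ^+ g; set x : rat := g%:R.
(* Cancelling the common factor needs no hypothesis on the denominator,
   since division by 0 yields 0 on both sides. *)
have t0 : - t ^+ 4 != 0 by rewrite oppr_eq0 !expf_neq0.
have -> : (x - 1) ^+ 2 / (- 3 * t + x ^+ 2 + 2 * x + 3) =
    (- t ^+ 4 * (x - 1) ^+ 2) / (- t ^+ 4 * (- 3 * t + x ^+ 2 + 2 * x + 3)).
  by rewrite -mulf_div divff ?mul1r.
by congr (_ / _); field.
Qed.
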